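(* Let $\lambda$ be a regular uncountable cardinal and $\mathcal{C}=\langle\mathcal{C}_\alpha\mid\alpha<\lambda\rangle$ a coherent sequence of length $\lambda$ (of arbitrary width). Suppose $T_0,T_1\subseteq\lambda$ are unbounded and for every $\alpha\in T_1$ there is $C\in\mathcal{C}_\alpha$ with $T_0\cap\alpha\subseteq C$. Then $\mathcal{C}$ has a weak thread.
   Context: For a set of ordinals $A$, $\mathrm{acc}(A)$ is the set of $\beta<\sup\{\alpha+1\mid\alpha\in A\}$ with $\beta=\sup(A\cap\beta)$. A coherent sequence of length $\lambda$ (of arbitrary width) is $\mathcal{C}=\langle\mathcal{C}_\alpha\mid\alpha<\lambda\rangle$ where each $\mathcal{C}_\alpha$ is a nonempty set of closed unbounded subsets of $\alpha$ (for successor $\alpha=\beta+1$, $\mathcal{C}_\alpha=\{\{\beta\}\}$), such that for all $\beta<\lambda$, $C\in\mathcal{C}_\beta$ and $\alpha\in\mathrm{acc}(C)$, $C\cap\alpha\in\mathcal{C}_\alpha$. A weak thread through $\mathcal{C}$ is a club $E\subseteq\lambda$ such that for every $\alpha\in\mathrm{acc}(E)$ there is $C\in\mathcal{C}_\alpha$ with $E\cap\alpha\subseteq C$. *)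

(* Ordinals below a regular uncountable cardinal lambda are
   modelled by a type T with a strict well-order lt of order type lambda.
   Sets of ordinals are predicates T -> Prop. *)
From Stdlib Require Import Classical FunctionalExtensionality PropExtensionality.

Section Defs.
Variable T : Type.
Variable lt : T -> T -> Prop.

Definition le (a b : T) : Prop := lt a b \/ a = b.

Definition regular_uncountable_cardinal : Prop :=
  (forall a, ~ lt a a) /\
  (forall a b c, lt a b -> lt b c -> lt a c) /\
  (forall a b, lt a b \/ a = b \/ lt b a) /\
  well_founded lt /\
  (* lambda is a cardinal: every alpha < lambda has cardinality < lambda *)
  (forall a : T, ~ exists f : T -> {b : T | lt b a},
        forall x y, f x = f y -> x = y) /\
  (* regular: every unbounded subset of lambda has cardinality lambda *)
  (forall S : T -> Prop, (forall a, exists b, S b /\ le a b) ->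
      exists f : T -> {b : T | S b}, forall x y, f x = f y -> x = y) /\
  (~ exists f : T -> nat, forall x y, f x = f y -> x = y).

Definition unbounded (A : T -> Prop) : Prop :=
  forall a, exists b, A b /\ le a b.

(* acc(A) = { beta < sup{alpha+1 | alpha in A} | beta = sup (A cap beta) } *)
Definition acc (A : T -> Prop) (b : T) : Prop :=
  (exists a, A a /\ le b a) /\
  (forall g, lt g b -> exists a, A a /\ lt g a /\ lt a b).

Definition closed (A : T -> Prop) : Prop :=
  forall b, acc A b -> (exists g, lt g b) -> A b.

Definition club_in (a : T) (C : T -> Prop) : Prop :=
  (forall x, C x -> lt x a) /\
  (forall g, lt g a -> exists c, C c /\ le g c) /\
  closed C.

Definition club (E : T -> Prop) : Prop := unbounded E /\ closed E.

Definition is_succ (a b : T) : Prop :=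
  lt b a /\ forall g, lt g a -> le g b.

(* Cs a C  means  C \in \mathcal{C}_a *)
Definition coherent (Cs : T -> (T -> Prop) -> Prop) : Prop :=
  (forall a, exists C, Cs a C) /\
  (forall a C, Cs a C -> club_in a C) /\
  (forall a b, is_succ a b -> forall C, Cs a C <-> (forall x, C x <-> x = b)) /\
  (forall b C a, Cs b C -> acc C a -> Cs a (fun x => C x /\ lt x a)).

Definition weak_thread (Cs : T -> (T -> Prop) -> Prop) (E : T -> Prop) : Prop :=
  club E /\
  forall a, acc E a -> exists C, Cs a C /\ (forall x, E x -> lt x a -> C x).

End Defs.

From Stdlib Require Import Classical FunctionalExtensionality PropExtensionality.

(* Take E to be the closure of T0 in lambda.  Given alpha in acc(E), choose
   beta >= alpha in T1 and C in C_beta with T0 cap beta inside C; as C is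
   closed, E cap beta lies inside C as well.  If alpha = beta we are done;
   otherwise alpha is a limit point of C, so coherence puts C cap alpha in
   C_alpha, and it contains E cap alpha. *)

Section WeakThread.

Variable T : Type.
Variable lt : T -> T -> Prop.
Hypothesis lt_trans : forall a b c, lt a b -> lt b c -> lt a c.

Definition closure (A : T -> Prop) (b : T) : Prop :=
  A b \/ (acc T lt A b /\ exists g, lt g b).

Lemma le_trans a b c : le T lt a b -> le T lt b c -> le T lt a c.
Proof.
  intros [Hab | <-] [Hbc | <-]; [left; eauto | left | left | right]; auto.
Qed.

Lemma acc_of_sub_below (A B : T -> Prop) b :
  acc T lt A b -> (exists c, B c /\ le T lt b c) ->
  (forall x, A x -> lt x b -> B x) -> acc T lt B b.
Proof.
  intros [_ HA] HB Hsub. split; [exact HB |].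
  intros g Hg. destruct (HA g Hg) as [a [Ha [Hga Hab]]].
  exists a. auto.
Qed.

Lemma acc_closure (A : T -> Prop) b : acc T lt (closure A) b -> acc T lt A b.
Proof.
  intros [[a [Ha Hba]] Hlim]. split.
  - destruct Ha as [Ha | [[[a' [Ha' Haa']] _] _]].
    + exists a. auto.
    + exists a'. split; [exact Ha' | exact (le_trans _ _ _ Hba Haa')].
  - intros g Hg. destruct (Hlim g Hg) as [a' [[Ha' | [[_ Ha'] _]] [Hga' Ha'b]]].
    + exists a'. auto.
    + destruct (Ha' g Hga') as [x [Hx [Hgx Hxa']]].
      exists x. split; [exact Hx | split; [exact Hgx | eauto]].
Qed.

Lemma club_closure (A : T -> Prop) : unbounded T lt A -> club T lt (closure A).
Proof.
  intros HA. split.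
  - intros a. destruct (HA a) as [b [Hb Hab]]. exists b. split; [left |]; auto.
  - intros b Hb Hnz. right. split; [exact (acc_closure _ _ Hb) | exact Hnz].
Qed.

Lemma closure_sub_club_in (A C : T -> Prop) b :
  club_in T lt b C -> (forall x, A x -> lt x b -> C x) ->
  forall x, closure A x -> lt x b -> C x.
Proof.
  intros [_ [HC Hcl]] Hsub x [Hx | [Hacc Hnz]] Hxb; [auto |].
  apply Hcl; [| exact Hnz].
  apply (acc_of_sub_below A); [exact Hacc | exact (HC x Hxb) |].
  intros y Hy Hyx. apply Hsub; eauto.
Qed.

Variable Cs : T -> (T -> Prop) -> Prop.
Hypothesis Hcoh : coherent T lt Cs.

Lemma coherent_restrict (E C : T -> Prop) a b :
  Cs b C -> lt a b -> acc T lt E a -> (forall x, E x -> lt x b -> C x) ->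
  exists C', Cs a C' /\ (forall x, E x -> lt x a -> C' x).
Proof.
  destruct Hcoh as [_ [Hclub [_ Hrestr]]].
  intros HC Hab HE Hsub.
  destruct (Hclub _ _ HC) as [_ [Hun _]].
  exists (fun x => C x /\ lt x a). split.
  - apply Hrestr with (1 := HC).
    apply (acc_of_sub_below E); [exact HE | exact (Hun a Hab) |].
    intros x Hx Hxa. apply Hsub; eauto.
  - intros x Hx Hxa. split; [apply Hsub; eauto | exact Hxa].
Qed.

End WeakThread.

Theorem lemma2p4 (T : Type) (lt : T -> T -> Prop)
  (Hlam : regular_uncountable_cardinal T lt)
  (Cs : T -> (T -> Prop) -> Prop) (Hcoh : coherent T lt Cs)
  (T0 T1 : T -> Prop) (H0 : unbounded T lt T0) (H1 : unbounded T lt T1)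
  (HT : forall a, T1 a -> exists C, Cs a C /\ (forall x, T0 x -> lt x a -> C x)) :
  exists E, weak_thread T lt Cs E.
Proof.
  destruct Hlam as [_ [lt_trans _]].
  exists (closure T lt T0). split; [exact (club_closure T lt lt_trans T0 H0) |].
  intros a Ha.
  destruct (H1 a) as [b [Hb Hab]].
  destruct (HT b Hb) as [C [HC HT0]].
  assert (Hsub : forall x, closure T lt T0 x -> lt x b -> C x).
  { apply closure_sub_club_in; [exact lt_trans | | exact HT0].
    destruct Hcoh as [_ [Hclub _]]. exact (Hclub _ _ HC). }
  destruct Hab as [Hab | <-].
  - exact (coherent_restrict T lt lt_trans Cs Hcoh _ C a b HC Hab Ha Hsub).
  - exists C. auto.
Qed.
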